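(* Let $G$ be a finite simple graph and $k$ a positive integer. Let $G'$ be the graph formed from $G$ by adding a vertex-disjoint copy of the complete bipartite graph $K_{k-1,2k}$, and let $G^\phi_k$ be the complement of $G'$. Then $G$ contains $K_{k,k}$ as a subgraph if and only if $\widetilde{\alpha}(G^\phi_k) \ge 2k$.
   Context: For disjoint vertex sets $S,T$, $E(S,T)$ is the set of edges with one end in $S$ and one in $T$. An $(s,t)$-bipartite-hole in a graph $F$ consists of two disjoint sets of vertices $S,T$ with $|S|=s$, $|T|=t$ and $E(S,T)=\emptyset$. The bipartite-hole-number $\widetilde{\alpha}(F)$ is the least integer $r$ which can be written as $r=s+t-1$ for some positive integers $s,t$ such that $F$ contains no $(s,t)$-bipartite-hole; equivalently the maximum $r$ such that $F$ has an $(s,t)$-bipartite-hole for all non-negative integers $s,t$ with $s+t=r$. $K_{a,b}$ denotes the complete bipartite graph with parts of sizes $a$ and $b$. *)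

From mathcomp Require Import all_boot.
Set Implicit Arguments. Unset Strict Implicit. Unset Printing Implicit Defensive.

Definition has_bhole (V : finType) (F : rel V) (s t : nat) : bool :=
  [exists S : {set V}, exists T : {set V},
     [&& #|S| == s, #|T| == t, [disjoint S & T]
       & [forall x in S, forall y in T, ~~ F x y]]].

(* r can be written as s + t - 1 with s, t positive and F has no (s,t)-hole. *)
Definition bhn_witness (V : finType) (F : rel V) (r : nat) : bool :=
  [exists s : 'I_r.+1, (0 < s) && ~~ has_bhole F s (r.+1 - s)].

Lemma bhn_witness_exists (V : finType) (F : rel V) : exists r, bhn_witness F r.
Proof.
exists #|V|.+1; apply/existsP.
have Hlt : #|V|.+1 < #|V|.+2 by [].
exists (Ordinal Hlt); rewrite /= subSnn.
apply/negP=> /existsP [S /existsP [T /and4P [HS _ _ _]]].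
move: (max_card (mem S)); rewrite (eqP HS); by rewrite ltnn.
Qed.

Definition bhn (V : finType) (F : rel V) : nat := ex_minn (bhn_witness_exists F).

Definition has_Kab (V : finType) (e : rel V) (a b : nat) : Prop :=
  exists A B : {set V}, [/\ #|A| = a, #|B| = b, [disjoint A & B] &
     forall x y, x \in A -> y \in B -> e x y].

Definition Gprime_vertex (V : finType) (k : nat) : finType :=
  (V + ('I_k.-1 + 'I_(2 * k)))%type.

Definition Gprime_rel (V : finType) (e : rel V) (k : nat) : rel (Gprime_vertex V k) :=
  fun u v =>
    match u, v with
    | inl x, inl y => e x y
    | inr (inl _), inr (inr _) => true
    | inr (inr _), inr (inl _) => true
    | _, _ => false
    end.

Definition Gphi (V : finType) (e : rel V) (k : nat) : rel (Gprime_vertex V k) :=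
  fun u v => (u != v) && ~~ @Gprime_rel V e k u v.

From mathcomp Require Import all_boot zify.
Set Implicit Arguments. Unset Strict Implicit. Unset Printing Implicit Defensive.

(* A bipartite hole in the loopless complement of G' is exactly a complete
   bipartite subgraph of G', so [bhn (Gphi e k) >= 2k] says that G' contains
   K_{s,t} whenever s, t > 0 and s + t <= 2k.  The added K_{k-1,2k} provides
   all of these with min(s, t) <= k - 1, which leaves K_{k,k}; and a K_{k,k}
   of G' cannot use the added component, whose smaller side has only k - 1
   vertices, so it lies in G. *)

Lemma subset_card_eq (T : finType) (A : {set T}) n :
  n <= #|A| -> exists2 B : {set T}, B \subset A & #|B| = n.
Proof.
move=> /card_geqP [s [s_uniq s_size sA]]; exists [set x in s].
  by apply/subsetP => x; rewrite inE => /sA.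
by rewrite cardsE -s_size; apply/card_uniqP.
Qed.

Lemma card_preimset_codom (U W : finType) (f : U -> W) (S : {set W}) :
  injective f -> S \subset codom f -> #|f @^-1: S| = #|S|.
Proof.
move=> f_inj /subsetP S_f; rewrite -(card_imset _ f_inj).
suff -> : f @: (f @^-1: S) = S by [].
apply/setP => w; apply/imsetP/idP => [[u] | wS].
  by rewrite inE => uS ->.
have /codomP [u euw] := S_f w wS; rewrite euw in wS *.
by exists u; rewrite ?inE.
Qed.

Lemma has_bholeP (V : finType) (F : rel V) s t :
  reflect (exists S T : {set V}, [/\ #|S| = s, #|T| = t, [disjoint S & T] &
             forall x y, x \in S -> y \in T -> ~~ F x y])
          (has_bhole F s t).
Proof.
apply: (iffP existsP) => [[S /existsP [T /and4P [/eqP cS /eqP cT dST hST]]] |].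
  exists S, T; split=> // x y xS yT.
  by move: hST => /forall_inP /(_ x xS) /forall_inP; apply.
move=> [S [T [cS cT dST hST]]]; exists S; apply/existsP; exists T.
rewrite cS cT !eqxx dST /=.
by apply/forall_inP => x xS; apply/forall_inP => y; apply: hST.
Qed.

(* The witness [r] of [bhn] stands for [r.+1 = s + t], so [bhn F >= n] says
   that every [(s, t)]-hole with [s + t <= n] is present. *)
Lemma leq_bhnP (V : finType) (F : rel V) n :
  n <= bhn F <->
  (forall s t, 0 < s -> 0 < t -> s + t <= n -> has_bhole F s t).
Proof.
rewrite /bhn; case: ex_minnP => m m_wit m_min; split.
- move=> n_le_m s t s_gt0 t_gt0 st_le_n; apply: contraLR n_le_m => no_hole.
  have s_lt : s < (s + t).-1.+1 by lia.
  have wit : bhn_witness F (s + t).-1.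
    apply/existsP; exists (Ordinal s_lt); rewrite /= s_gt0.
    by have -> : (s + t).-1.+1 - s = t by lia.
  have := m_min _ wit; lia.
- move=> holes; rewrite leqNgt; apply/negP => m_lt_n.
  move: m_wit => /existsP [s /andP [s_gt0 /negP]]; apply.
  have s_lt := ltn_ord s; apply: holes => //; lia.
Qed.

Lemma has_bhole_compl (V : finType) (F E : rel V) s t :
  (forall u v, F u v = (u != v) && ~~ E u v) ->
  has_bhole F s t <-> has_Kab E s t.
Proof.
move=> FE; split=> [/has_bholeP [S [T [cS cT dST noF]]] | [S [T [cS cT dST hE]]]].
  exists S, T; split=> // x y xS yT; move: (noF x y xS yT).
  rewrite FE negb_and !negbK => /orP [/eqP exy | //].
  by move: yT; rewrite -exy (disjointFr dST xS).
apply/has_bholeP; exists S, T; split=> // x y xS yT.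
by rewrite FE hE ?andbF.
Qed.

Lemma has_Kab_leq (V : finType) (e : rel V) a b a' b' :
  a' <= a -> b' <= b -> has_Kab e a b -> has_Kab e a' b'.
Proof.
move=> le_a le_b [A [B [cA cB dAB hAB]]].
rewrite -cA in le_a; rewrite -cB in le_b.
have [A' sA' cA'] := subset_card_eq le_a.
have [B' sB' cB'] := subset_card_eq le_b.
exists A', B'; split=> //; first exact: disjointW dAB.
by move=> x y xA yB; apply: hAB; [apply: (subsetP sA') | apply: (subsetP sB')].
Qed.

Lemma has_Kab_sym (V : finType) (e : rel V) a b :
  symmetric e -> has_Kab e a b -> has_Kab e b a.
Proof.
move=> e_sym [A [B [cA cB dAB hAB]]]; exists B, A.
by split=> //; [rewrite disjoint_sym | move=> x y xB yA; rewrite e_sym hAB].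
Qed.

Lemma has_Kab_inj (U W : finType) (e : rel U) (e' : rel W) (f : U -> W) a b :
  injective f -> (forall x y, e x y -> e' (f x) (f y)) ->
  has_Kab e a b -> has_Kab e' a b.
Proof.
move=> f_inj f_hom [A [B [cA cB dAB hAB]]].
exists (f @: A), (f @: B); rewrite !card_imset //; split=> //.
  rewrite -setI_eq0 -imsetI ?disjoint_setI0 ?imset0 //.
  by move=> x y _ _; apply: f_inj.
by move=> _ _ /imsetP [x xA ->] /imsetP [y yB ->]; apply/f_hom/hAB.
Qed.

Lemma has_Kab_preimset (U W : finType) (e : rel U) (e' : rel W) (f : U -> W)
    (S T : {set W}) :
  injective f -> (forall x y, e' (f x) (f y) -> e x y) ->
  S \subset codom f -> T \subset codom f -> [disjoint S & T] ->
  (forall x y, x \in S -> y \in T -> e' x y) -> has_Kab e #|S| #|T|.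
Proof.
move=> f_inj f_refl S_f T_f dST hST.
exists (f @^-1: S), (f @^-1: T); rewrite !card_preimset_codom //; split=> //.
  by rewrite -setI_eq0 -preimsetI disjoint_setI0 ?preimset0.
by move=> x y; rewrite !inE => xS yT; apply/f_refl/hST.
Qed.

Section ExtendedGraph.

Variables (V : finType) (e : rel V) (k : nat).

Local Notation Gprime := (@Gprime_rel V e k).

Lemma Gprime_rel_sym : symmetric e -> symmetric Gprime.
Proof. by move=> e_sym [x | [i | j]] [y | [i' | j']] //=. Qed.

Let L : {set Gprime_vertex V k} :=
  [set (inr (inl i) : Gprime_vertex V k) | i : 'I_k.-1].
Let R : {set Gprime_vertex V k} :=
  [set (inr (inr j) : Gprime_vertex V k) | j : 'I_(2 * k)].

Lemma has_Kab_Gprime_extra : has_Kab Gprime k.-1 (2 * k).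
Proof.
exists L, R; rewrite !card_imset ?card_ord //; try by move=> ? ? [].
split=> //; last by move=> _ _ /imsetP [i _ ->] /imsetP [j _ ->].
by rewrite -setI_eq0; apply/set0Pn => [[_ /setIP [/imsetP [i _ ->] /imsetP [j]]]].
Qed.

Lemma has_Kab_Gprime_inl a b : has_Kab e a b -> has_Kab Gprime a b.
Proof. by apply: (has_Kab_inj (f := inl)) => // x y []. Qed.

Lemma has_Kab_GprimeK a b :
  k.-1 < a -> k.-1 < b -> has_Kab Gprime a b -> has_Kab e a b.
Proof.
move=> a_gt b_gt [S [T [cS cT dST hST]]].
have card_L : #|L| = k.-1 by rewrite card_imset ?card_ord // => ? ? [].
have small_L (X : {set _}) : X \subset L -> #|X| <= k.-1.
  by rewrite -card_L; apply: subset_leq_card.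
have /set0Pn [x0 x0S] : S != set0 by rewrite -card_gt0 cS; lia.
have /set0Pn [y0 y0T] : T != set0 by rewrite -card_gt0 cT; lia.
case: x0 x0S (hST _ _ x0S y0T) => [x | [i | j]] x0S;
  case: y0 y0T => [y | [i' | j']] y0T //= _.
- rewrite -cS -cT; apply: (has_Kab_preimset (f := inl) (e' := Gprime)) => //.
  + by move=> ? ? [].
  + by apply/subsetP => -[u | [u | u]] /hST /(_ y0T) //= _; apply: codom_f.
  + by apply/subsetP => -[u | [u | u]] /(hST _ _ x0S) //= _; apply: codom_f.
- suff /small_L : S \subset L by rewrite cS leqNgt a_gt.
  by apply/subsetP => -[u | [u | u]] /hST /(_ y0T) //= _; apply: imset_f.
- suff /small_L : T \subset L by rewrite cT leqNgt b_gt.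
  by apply/subsetP => -[u | [u | u]] /(hST _ _ x0S) //= _; apply: imset_f.
Qed.

End ExtendedGraph.

Theorem lemma12 (V : finType) (e : rel V)
  (e_sym : symmetric e) (e_irr : irreflexive e) (k : nat) (k_pos : 0 < k) :
  has_Kab e k k <-> 2 * k <= bhn (@Gphi V e k).
Proof.
have hole_Kab s t :
    has_bhole (@Gphi V e k) s t <-> has_Kab (@Gprime_rel V e k) s t.
  exact: has_bhole_compl.
have extra := has_Kab_Gprime_extra e k.
have extra_sym := has_Kab_sym (Gprime_rel_sym (k := k) e_sym) extra.
rewrite leq_bhnP; split=> [Kkk s t s_gt0 t_gt0 st_le | holes].
- apply/hole_Kab.
  have [s_le | s_gt] := leqP s k.-1; first by apply: has_Kab_leq _ _ extra; lia.
  have [t_le | t_gt] := leqP t k.-1.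
    by apply: has_Kab_leq _ _ extra_sym; lia.
  have [-> ->] : s = k /\ t = k by lia.
  exact: has_Kab_Gprime_inl.
- by apply: (has_Kab_GprimeK (k := k)); [lia | lia | apply/hole_Kab/holes; lia].
Qed.
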